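(* For every positive integer $r$ and nonnegative integer $n$, as formal power series in $t$, \[ \frac{A^r_n(t,q)}{\prod_{i=0}^n(1-tq^{ri})}=\sum_{k=0}^n\frac{q^{r\binom{k+1}{2}+(1-r)k}\,[r]_q^k\,[k]_{q^r}!\,S_r[n,k]\,t^k}{\prod_{i=0}^k(1-tq^{ri})}. \]
   Context: $[k]_q=1+\dots+q^{k-1}$, $[0]_q=0$, $[k]_q!=\prod_{i=1}^k[i]_q$; the subscript $q^r$ means $q$ replaced by $q^r$. The $r$-colored $q$-Stirling numbers of the second kind are defined by $S_r[0,k]=\delta_{0k}$ and $S_r[n,k]=S_r[n-1,k-1]+[rk+1]_qS_r[n-1,k]$ for $n\ge1$. The colored permutation group $\mathbb{Z}_r\wr\mathfrak{S}_n$ consists of words $\pi=\pi_1^{z_1}\cdots\pi_n^{z_n}$ with $\pi_1\cdots\pi_n\in\mathfrak{S}_n$ and colors $z_i\in\{0,\dots,r-1\}$, where $k^0$ is written $k$; these letters are totally ordered by $n^{r-1}<\dots<n^1<\dots<1^{r-1}<\dots<1^1<0<1<\dots<n$. With $\pi_0^{z_0}=0$, $\mathrm{Des}_r(\pi)=\{i\in\{0,\dots,n-1\}:\pi_i^{z_i}>\pi_{i+1}^{z_{i+1}}\}$, $\mathrm{des}_r(\pi)=|\mathrm{Des}_r(\pi)|$, $\mathrm{fmaj}_r(\pi)=r\sum_{i\in\mathrm{Des}_r(\pi)}i+\sum_{i=1}^nz_i$, and $A^r_n(t,q)=\sum_{\pi\in\mathbb{Z}_r\wr\mathfrak{S}_n}t^{\mathrm{des}_r(\pi)}q^{\mathrm{fmaj}_r(\pi)}$.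 *)

From HB Require Import structures.
From mathcomp Require Import all_boot all_order all_algebra all_fingroup.
Set Implicit Arguments. Unset Strict Implicit. Unset Printing Implicit Defensive.
Import Order.TTheory GRing.Theory Num.Theory.
Local Open Scope ring_scope.

Definition qint (R : pzSemiRingType) (x : R) (k : nat) : R :=
  \sum_(i < k) x ^+ i.

Definition qfact (R : pzSemiRingType) (x : R) (k : nat) : R :=
  \prod_(i < k) qint x i.+1.

Fixpoint qstir (R : pzSemiRingType) (q : R) (r n k : nat) : R :=
  match n with
  | 0 => (k == 0%N)%:R
  | n'.+1 =>
      (match k with 0 => 0 | k'.+1 => qstir q r n' k' end)
      + qint q (r * k + 1) * qstir q r n' k
  end.

(* Colored letters: a letter k^c is encoded as the pair (k, c), k in 1..n,
   c in 0..r-1; the letter 0 is encoded as (0, 0).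
   Total order: n^{r-1} < ... < n^1 < ... < 1^{r-1} < ... < 1^1 < 0 < 1 < ... < n.
   letter_lt a b  <=>  a < b  in this order. *)
Definition letter_lt (a b : nat * nat) : bool :=
  let: (k, c) := a in
  let: (k', c') := b in
  if c == 0%N then (c' == 0%N) && (k < k')%N
  else [|| c' == 0%N, (k' < k)%N | (k == k') && (c' < c)%N].

(* An element of Z_r wr S_n is a pair (s, z) with s : 'S_n (the value s i
   in 0..n-1 stands for the letter (s i)+1) and colors z : 'I_n -> 'I_r.
   colored_letter s z i is the i-th letter pi_i^{z_i}, for i = 0..n, with
   pi_0^{z_0} = 0. *)
Definition colored_letter (n r : nat) (s : 'S_n) (z : {ffun 'I_n -> 'I_r})
  (i : nat) : nat * nat :=
  match i with
  | 0 => (0%N, 0%N)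
  | i'.+1 =>
      match insub i' : option 'I_n with
      | Some j => ((s j).+1, nat_of_ord (z j))
      | None => (0%N, 0%N)
      end
  end.

Definition is_descent (n r : nat) (s : 'S_n) (z : {ffun 'I_n -> 'I_r})
  (i : 'I_n) : bool :=
  letter_lt (colored_letter s z i.+1) (colored_letter s z i).

Definition des_r (n r : nat) (s : 'S_n) (z : {ffun 'I_n -> 'I_r}) : nat :=
  #|[set i : 'I_n | is_descent s z i]|.

Definition fmaj_r (n r : nat) (s : 'S_n) (z : {ffun 'I_n -> 'I_r}) : nat :=
  (r * (\sum_(i : 'I_n | is_descent s z i) (i : nat))
   + \sum_(j : 'I_n) (z j : nat))%N.

Definition colored_eulerian (R : pzSemiRingType) (r n : nat) (t q : R) : R :=
  \sum_(s : 'S_n) \sum_(z : {ffun 'I_n -> 'I_r})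
     t ^+ des_r s z * q ^+ fmaj_r s z.

From mathcomp Require Import all_boot all_algebra all_fingroup.
From mathcomp Require Import fraction ring zify.
Import GRing.Theory.
Local Open Scope ring_scope.

(* Inserting the letter n+1 with colour c at each of the n+1 positions of a coloured
   permutation of [n] replaces one comparison of its descent word by a descent followed
   by an ascent (c <> 0) or by an ascent followed by a descent (c = 0), and shifts the
   later ones.  Summing the weights over the insertion positions telescopes, giving
     (1 - q^r) A_{n+1}(t) = [r]_q (1 - t q^{r(n+1)}) A_n(t) - q [r]_q (1 - t) A_n(t q^r).
   By the recursion of S_r[n,k], the right-hand side of the identity, multiplied by
   prod_{i<=n} (1 - t q^{ri}), satisfies the same recurrence; both sides are 1 at n = 0,
   so induction on n, for all t at once (the recurrence also involves t q^r), concludes. *)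

Lemma sum_reindex_inj {R : nmodType} {I J : finType} (h : I -> J) (F : J -> R) :
  injective h -> (#|J| <= #|I|)%N -> \sum_(j : J) F j = \sum_(i : I) F (h i).
Proof. by move=> h_inj le_JI; apply/reindex/onW_bij/inj_card_bij. Qed.

Lemma sum_perm_lift {R : nmodType} n (G : 'S_n.+1 -> R) :
  \sum_(s : 'S_n.+1) G s = \sum_(p : 'I_n.+1) \sum_(s : 'S_n) G (lift_perm p ord_max s).
Proof.
rewrite pair_big (sum_reindex_inj (fun ps => lift_perm ps.1 ord_max ps.2)) //.
  move=> [p s] [p' s'] /= E.
  have Ep : p = p'.
    by apply: (perm_inj (s := lift_perm p' ord_max s')); rewrite -{1}E !lift_perm_id.
  subst p'; congr (_, _); apply/permP => k; apply: (@lift_inj _ ord_max).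
  by rewrite -!(lift_perm_lift p) E.
by rewrite card_prod !card_Sn card_ord factS.
Qed.

Definition color_insert {n r : nat} (p : 'I_n.+1) (c : 'I_r) (z : {ffun 'I_n -> 'I_r}) :
  {ffun 'I_n.+1 -> 'I_r} :=
  [ffun i => if unlift p i is Some k then z k else c].

Lemma sum_color_insert {R : nmodType} {n r : nat} (p : 'I_n.+1)
    (H : {ffun 'I_n.+1 -> 'I_r} -> R) :
  \sum_(z : {ffun 'I_n.+1 -> 'I_r}) H z
  = \sum_(c : 'I_r) \sum_(z : {ffun 'I_n -> 'I_r}) H (color_insert p c z).
Proof.
rewrite pair_big (sum_reindex_inj (fun cz => color_insert p cz.1 cz.2)) //.
  move=> [c z] [c' z'] /= /ffunP E; congr (_, _).
    by have := E p; rewrite !ffunE unlift_none.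
  by apply/ffunP => k; have := E (lift p k); rewrite !ffunE liftK.
by rewrite card_prod !card_ffun !card_ord expnS.
Qed.

Definition color_sum {n r : nat} (z : {ffun 'I_n -> 'I_r}) : nat := \sum_(j : 'I_n) z j.

Lemma color_sum_insert {n r : nat} (p : 'I_n.+1) (c : 'I_r) (z : {ffun 'I_n -> 'I_r}) :
  color_sum (color_insert p c z) = (c + color_sum z)%N.
Proof.
rewrite /color_sum (bigD1_ord p) //= ffunE unlift_none; congr (_ + _)%N.
by apply: eq_bigr => j _; rewrite ffunE liftK.
Qed.

Section Letters.
Context {n r : nat} (s : 'S_n) (z : {ffun 'I_n -> 'I_r}).

Lemma colored_letter_ord (j : 'I_n) :
  colored_letter s z j.+1 = ((s j).+1, z j : nat).
Proof. by rewrite /colored_letter valK. Qed.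

Lemma colored_letter_out k : (n <= k)%N -> colored_letter s z k.+1 = (0, 0)%N.
Proof. by move=> le_nk; rewrite /colored_letter insubN // -leqNgt. Qed.

Lemma colored_letter_le k : ((colored_letter s z k).1 <= n)%N.
Proof.
case: k => [|k] //.
case: (ltnP k n) => [lt_kn | le_nk]; last by rewrite colored_letter_out.
by rewrite (colored_letter_ord (Ordinal lt_kn)) /= ltn_ord.
Qed.

End Letters.

Lemma letter_lt_freshl n (a : nat * nat) c :
  (a.1 <= n)%N -> letter_lt (n.+1, c) a = (c != 0%N).
Proof. by case: a => k c' /= le_kn; rewrite /letter_lt; case: eqP; case: eqP; lia. Qed.

Lemma letter_lt_freshr n (a : nat * nat) c :
  (a.1 <= n)%N -> letter_lt a (n.+1, c) = (c == 0%N).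
Proof. by case: a => k c' /= le_kn; rewrite /letter_lt; case: eqP; case: eqP; lia. Qed.

Lemma colored_letter_insert {n r : nat} (s : 'S_n) (z : {ffun 'I_n -> 'I_r}) p c k :
  colored_letter (lift_perm p ord_max s) (color_insert p c z) k =
  if (k <= p)%N then colored_letter s z k
  else if k == p.+1 then (n.+1, c : nat) else colored_letter s z k.-1.
Proof.
case: k => [|k] //; rewrite eqSS -[k.+1.-1]/k.
case: (ltnP k n.+1) => [lt_kn | le_nk]; last first.
  rewrite colored_letter_out // ifN ?ifN; try by have := ltn_ord p; lia.
  by case: k le_nk => // k le_nk; rewrite colored_letter_out.
have -> : k = Ordinal lt_kn by [].
rewrite colored_letter_ord /color_insert ffunE.
case: unliftP => [j | ] ->; last by rewrite lift_perm_id ltnn eqxx.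
rewrite lift_perm_lift lift_max.
case: (leqP p j) => [le_pj | lt_jp].
  have -> : lift p j = j.+1 :> nat by rewrite /= /bump le_pj.
  by rewrite ltnNge (leqW le_pj) gtn_eqF ?colored_letter_ord.
have -> : lift p j = j :> nat by rewrite /= /bump leqNgt lt_jp.
by rewrite lt_jp colored_letter_ord.
Qed.

(* The descent word [f] after a letter is inserted between positions [p] and [p+1]:
   the comparison at [p] becomes [b], a new comparison [~~ b] follows, later ones shift. *)
Definition splice (b : bool) (p : nat) (f : nat -> bool) (i : nat) : bool :=
  if (i < p)%N then f i else if i == p then b else if i == p.+1 then ~~ b else f i.-1.

Lemma splice_succ b p f : (fun i => splice b p.+1 f i.+1) =1 splice b p (fun i => f i.+1).
Proof.
move=> i; rewrite /splice ltnS !eqSS; case: ltngtP => // lt_pi.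
by case: eqP => // _; rewrite prednK // (leq_ltn_trans (leq0n p) lt_pi).
Qed.

Definition word_weight {R : comPzRingType} (Q x : R) (n : nat) (f : nat -> bool) : R :=
  \prod_(i < n) (if f i then x * Q ^+ i else 1).

Lemma eq_word_weight {R : comPzRingType} {Q x : R} {n f g} :
  f =1 g -> word_weight Q x n f = word_weight Q x n g.
Proof. by move=> eq_fg; apply: eq_bigr => i _; rewrite eq_fg. Qed.

Lemma word_weightS {R : comPzRingType} (Q x : R) n f :
  word_weight Q x n.+1 f = (if f 0%N then x else 1) * word_weight Q (x * Q) n (fun i => f i.+1).
Proof.
rewrite /word_weight big_ord_recl expr0 mulr1; congr (_ * _).
by apply: eq_bigr => i _; rewrite lift0 exprS mulrA.
Qed.

Lemma sum_word_weight_splice {R : comPzRingType} (Q : R) b n f x :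
  (1 - Q) * \sum_(p < n.+1) word_weight Q x n.+1 (splice b p f)
  = (1 - x * Q ^+ n.+1) * word_weight Q x n f
    - (1 - x) * Q ^+ (~~ b) * word_weight Q (x * Q) n f.
Proof.
elim: n x f => [|n IH] x f.
  by rewrite big_ord1 /word_weight big_ord1 !big_ord0 /splice /=; case: b; ring.
have head : word_weight Q x n.+2 (splice b 0 f)
            = x * Q ^+ (~~ b) * word_weight Q (x * Q * Q) n (fun i => f i.+1).
  by rewrite !word_weightS /splice /=; case: (b) => /=; ring.
have tail (p : 'I_n.+1) : word_weight Q x n.+2 (splice b (lift ord0 p) f)
    = (if f 0%N then x else 1) * word_weight Q (x * Q) n.+1 (splice b p (fun i => f i.+1)).
  by rewrite lift0 word_weightS (eq_word_weight (splice_succ b p f)).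
rewrite big_ord_recl head (eq_bigr _ (fun p _ => tail p)) -big_distrr /=.
rewrite mulrDr [_ * (_ * \sum_(i < _) _)]mulrCA IH !(word_weightS Q _ n) !exprS.
set U := word_weight Q (x * Q) n _; set V := word_weight Q (x * Q * Q) n _.
by case: (f 0%N); case: (b) => /=; ring.
Qed.

Definition descent_word {n r : nat} (s : 'S_n) (z : {ffun 'I_n -> 'I_r}) (i : nat) : bool :=
  letter_lt (colored_letter s z i.+1) (colored_letter s z i).

Lemma descent_word_insert {n r : nat} (s : 'S_n) (z : {ffun 'I_n -> 'I_r}) p c :
  descent_word (lift_perm p ord_max s) (color_insert p c z)
  =1 splice (c != 0%N :> nat) p (descent_word s z).
Proof.
move=> i; rewrite /descent_word /splice !colored_letter_insert eqSS -[i.+1.-1]/i.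
case: (ltngtP i p) => // [lt_pi | ->]; last by rewrite letter_lt_freshl ?colored_letter_le.
case: eqP => [_ | _]; first by rewrite letter_lt_freshr ?colored_letter_le // negbK.
by rewrite prednK // (leq_ltn_trans (leq0n p) lt_pi).
Qed.

Lemma des_fmaj_weight {R : comPzRingType} {n r : nat} (s : 'S_n) (z : {ffun 'I_n -> 'I_r})
    (x q : R) :
  x ^+ des_r s z * q ^+ fmaj_r s z
  = word_weight (q ^+ r) x n (descent_word s z) * q ^+ color_sum z.
Proof.
rewrite /fmaj_r exprD exprM mulrA; congr (_ * _).
rewrite /des_r cardsE /word_weight -big_mkcond big_split /= prodrXr.
by congr (_ * _); rewrite -prodr_const.
Qed.

Lemma qint_geometric {R : comPzRingType} (y : R) m : (1 - y) * qint y m = 1 - y ^+ m.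
Proof. by rewrite /qint -[1 - y]opprB -[1 - y ^+ m]opprB subrX1 mulNr. Qed.

Lemma qint_rotate {R : comPzRingType} (q : R) {r : nat} : (0 < r)%N ->
  \sum_(c < r) q ^+ c * (q ^+ r) ^+ (c == 0%N :> nat) = q * qint q r.
Proof.
case: r => [|r] // _; rewrite big_ord_recl /qint big_ord_recr /= expr1 expr0 mul1r.
rewrite mulrDr -exprS addrC big_distrr; congr (_ + _).
by apply: eq_bigr => i _; rewrite mulr1 exprS.
Qed.

Section EulerianRecurrence.
Context {R : comPzRingType} (r : nat) (q : R).
Local Notation Q := (q ^+ r).

Lemma colored_eulerian_word n x :
  colored_eulerian r n x q = \sum_(s : 'S_n) \sum_(z : {ffun 'I_n -> 'I_r})
    word_weight Q x n (descent_word s z) * q ^+ color_sum z.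
Proof. by apply: eq_bigr => s _; apply: eq_bigr => z _; apply: des_fmaj_weight. Qed.

Lemma colored_eulerian0 x : colored_eulerian r 0 x q = 1.
Proof.
rewrite colored_eulerian_word.
under eq_bigr do under eq_bigr do rewrite /word_weight /color_sum !big_ord0 mul1r.
by rewrite !sumr_const card_ffun !card_ord card_Sn.
Qed.

Lemma colored_eulerianS n x :
  colored_eulerian r n.+1 x q = \sum_(s : 'S_n) \sum_(z : {ffun 'I_n -> 'I_r})
    q ^+ color_sum z * \sum_(c < r) q ^+ c *
      \sum_(p < n.+1) word_weight Q x n.+1 (splice (c != 0%N :> nat) p (descent_word s z)).
Proof.
rewrite colored_eulerian_word sum_perm_lift exchange_big /=; apply: eq_bigr => s _.
transitivity (\sum_(p < n.+1) \sum_(c < r) \sum_(z : {ffun 'I_n -> 'I_r}) q ^+ color_sum z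
    * (q ^+ c * word_weight Q x n.+1 (splice (c != 0%N :> nat) p (descent_word s z)))).
  apply: eq_bigr => p _; rewrite (sum_color_insert p); apply: eq_bigr => c _.
  apply: eq_bigr => z _; rewrite (eq_word_weight (descent_word_insert s z p c)).
  by rewrite color_sum_insert exprD; ring.
rewrite exchange_big /=; under eq_bigr do rewrite exchange_big /=.
rewrite exchange_big /=; apply: eq_bigr => z _.
by rewrite big_distrr; apply: eq_bigr => c _; rewrite !big_distrr.
Qed.

Lemma colored_eulerian_rec n x : (0 < r)%N ->
  (1 - Q) * colored_eulerian r n.+1 x q
  = qint q r * (1 - x * Q ^+ n.+1) * colored_eulerian r n x q
    - q * qint q r * (1 - x) * colored_eulerian r n (x * Q) q.
Proof.
move=> r_gt0; rewrite colored_eulerianS !colored_eulerian_word.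
set a := qint q r * _; set b := q * qint q r * _.
rewrite !big_distrr -sumrB; apply: eq_bigr => s _.
rewrite !big_distrr -sumrB; apply: eq_bigr => z _ /=.
set W := word_weight Q x n _; set V := word_weight Q (x * Q) n _.
have sum_colors : (1 - Q) * \sum_(c < r) q ^+ c * \sum_(p < n.+1)
      word_weight Q x n.+1 (splice (c != 0%N :> nat) p (descent_word s z))
    = qint q r * ((1 - x * Q ^+ n.+1) * W) - q * qint q r * ((1 - x) * V).
  rewrite big_distrr /=.
  under eq_bigr => c _ do rewrite mulrCA sum_word_weight_splice negbK.
  rewrite -(qint_rotate q r_gt0) /qint !big_distrl -sumrB.
  by apply: eq_bigr => c _ /=; rewrite -/W -/V; ring.
by rewrite mulrCA sum_colors /a /b; ring.
Qed.

End EulerianRecurrence.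

Lemma qstirS {R : pzSemiRingType} (q : R) r n k :
  qstir q r n.+1 k
  = (if k is k'.+1 then qstir q r n k' else 0) + qint q (r * k + 1) * qstir q r n k.
Proof. by []. Qed.

Lemma qstir_eq0 {R : pzSemiRingType} (q : R) r n k : (n < k)%N -> qstir q r n k = 0.
Proof.
elim: n k => [|n IH] [|k] //= lt_nk.
by rewrite !IH ?mulr0 ?addr0 // ltnW.
Qed.

Lemma sum_qstirS {R : comPzSemiRingType} (q : R) r n (T : nat -> R) :
  \sum_(k < n.+2) qstir q r n.+1 k * T k
  = \sum_(k < n.+1) qstir q r n k * (T k.+1 + qint q (r * k + 1) * T k).
Proof.
under eq_bigr do rewrite qstirS mulrDl.
rewrite big_split /= big_ord_recl [X in _ + X]big_ord_recr /= qstir_eq0 //.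
rewrite mulr0 !mul0r add0r addr0 -big_split /=; apply: eq_bigr => k _.
by rewrite mulrDr [qint _ _ * _]mulrC mulrA.
Qed.

Section Expansion.
Context {F : fieldType} (q : F) (r : nat).
Local Notation Q := (q ^+ r).

Definition qpoch (x : F) (k : nat) : F := \prod_(i < k.+1) (1 - x * q ^+ (r * i)).

Definition expansion_coef (k : nat) : F :=
  q ^+ (r * 'C(k.+1, 2) + k - r * k) * qint q r ^+ k * qfact Q k.

Definition expansion_term (k : nat) (x : F) : F := expansion_coef k * x ^+ k / qpoch x k.

Definition expansion (n : nat) (x : F) : F :=
  \sum_(k < n.+1) qstir q r n k * expansion_term k x.

Definition admissible (x : F) : Prop := forall m, 1 - x * q ^+ (r * m) != 0.

Lemma admissible_shift {x} : admissible x -> admissible (x * Q).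
Proof. by move=> adm_x m; rewrite -mulrA -exprD -mulnS. Qed.

Lemma qpoch_neq0 {x} k : admissible x -> qpoch x k != 0.
Proof. by move=> adm_x; apply/prodf_neq0 => i _. Qed.

Lemma qpochS x k : qpoch x k.+1 = qpoch x k * (1 - x * Q ^+ k.+1).
Proof. by rewrite /qpoch big_ord_recr exprM. Qed.

Lemma qpochS_shift x k : qpoch x k.+1 = (1 - x) * qpoch (x * Q) k.
Proof.
rewrite /qpoch big_ord_recl muln0 expr0 mulr1; congr (_ * _).
by apply: eq_bigr => i _; rewrite lift0 -mulrA -exprD -mulnS.
Qed.

Lemma expansion_coefS k :
  expansion_coef k.+1 = expansion_coef k * (q * Q ^+ k * qint q r * qint Q k.+1).
Proof.
have exponentS : (r * 'C(k.+2, 2) + k.+1 - r * k.+1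
                  = (r * 'C(k.+1, 2) + k - r * k) + (r * k + 1))%N.
  rewrite !binS bin1 bin0; set c := 'C(k, 2); nia.
rewrite /expansion_coef /qfact (big_ord_recr k) /= exponentS exprD addn1 !exprS exprM.
ring.
Qed.

Lemma expansion_term_rec x k : admissible x ->
  (1 - Q) * (expansion_term k.+1 x + qint q (r * k + 1) * expansion_term k x)
  = qint q r * (expansion_term k x - q * expansion_term k (x * Q)).
Proof.
move=> adm_x; set D := expansion_coef k * x ^+ k / qpoch x k.+1.
have P_neq0 := qpoch_neq0 k adm_x.
have Pshift_neq0 := qpoch_neq0 k (admissible_shift adm_x).
have top_neq0 : 1 - x * Q ^+ k.+1 != 0 by rewrite -exprM.
have x_neq1 : 1 - x != 0 by have := adm_x 0%N; rewrite muln0 mulr1.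
have term_next : expansion_term k.+1 x = D * (q * Q ^+ k * qint q r * qint Q k.+1 * x).
  by rewrite /D /expansion_term expansion_coefS exprS; ring.
have term_here : expansion_term k x = D * (1 - x * Q ^+ k.+1).
  by rewrite /D qpochS /expansion_term; field; apply/andP.
have term_shift : expansion_term k (x * Q) = D * (Q ^+ k * (1 - x)).
  by rewrite /D qpochS_shift /expansion_term exprMn; field; apply/andP.
have factor_rec : (1 - Q) * (q * Q ^+ k * qint q r * qint Q k.+1 * x
                      + qint q (r * k + 1) * (1 - x * Q ^+ k.+1))
    = qint q r * ((1 - x * Q ^+ k.+1) - q * (Q ^+ k * (1 - x))).
  have geom_r : (1 - q) * qint q r = 1 - Q by rewrite qint_geometric.
  have geom_rk : (1 - Q) * qint q (r * k + 1) = qint q r * (1 - q * Q ^+ k).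
    by rewrite -geom_r -mulrA mulrCA qint_geometric addn1 exprS exprM.
  transitivity (q * Q ^+ k * qint q r * x * ((1 - Q) * qint Q k.+1)
                + (1 - Q) * qint q (r * k + 1) * (1 - x * Q ^+ k.+1)); first by ring.
  by rewrite qint_geometric geom_rk !exprS; ring.
rewrite term_next term_here term_shift.
transitivity (D * ((1 - Q) * (q * Q ^+ k * qint q r * qint Q k.+1 * x
                      + qint q (r * k + 1) * (1 - x * Q ^+ k.+1)))); first by ring.
by rewrite factor_rec; ring.
Qed.

Lemma expansion_rec n x : admissible x ->
  (1 - Q) * expansion n.+1 x = qint q r * (expansion n x - q * expansion n (x * Q)).
Proof.
move=> adm_x; rewrite /expansion (sum_qstirS q r n (expansion_term ^~ x)) big_distrr /=.
under eq_bigr => k _ do rewrite mulrCA expansion_term_rec //.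
rewrite [q * _]big_distrr -sumrB big_distrr /=; apply: eq_bigr => k _; ring.
Qed.

Lemma expansion0 x : admissible x -> qpoch x 0 * expansion 0 x = 1.
Proof.
move=> adm_x; have := qpoch_neq0 0 adm_x.
rewrite /expansion big_ord1 /expansion_term /expansion_coef /qfact big_ord0 /=.
by rewrite bin_small // !muln0 !expr0 => P_neq0; field.
Qed.

End Expansion.

Theorem colored_eulerian_expansion {F : fieldType} (q : F) r n x :
  (0 < r)%N -> 1 - q ^+ r != 0 -> admissible q r x ->
  colored_eulerian r n x q = qpoch q r x n * expansion q r n x.
Proof.
move=> r_gt0 Q_neq1; elim: n x => [|n IH] x adm_x.
  by rewrite colored_eulerian0 expansion0.
have adm_xQ := admissible_shift q r adm_x.
apply: (mulfI Q_neq1); rewrite colored_eulerian_rec // !IH //.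
transitivity (qint q r * (qpoch q r x n * (1 - x * (q ^+ r) ^+ n.+1)) * expansion q r n x
    - q * qint q r * ((1 - x) * qpoch q r (x * q ^+ r) n) * expansion q r n (x * q ^+ r)).
  by ring.
by rewrite -qpochS -qpochS_shift [RHS]mulrCA expansion_rec //; ring.
Qed.

Lemma oneBXM_neq0 {R : nzRingType} (p : {poly R}) : 1 - 'X * p != 0.
Proof.
apply/eqP => /(congr1 (fun s : {poly R} => s`_0)).
by rewrite coefB coef1 coefXM coef0 subr0 => /eqP; rewrite oner_eq0.
Qed.

Theorem proposition4p1 (r n : nat) (hr : (0 < r)%N) :
  let F := {fraction {poly {poly int}}} in
  let q : F := @FracField.tofrac _ (('X : {poly int})%:P : {poly {poly int}}) in
  let t : F := @FracField.tofrac _ ('X : {poly {poly int}}) in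
  colored_eulerian r n t q / \prod_(i < n.+1) (1 - t * q ^+ (r * i)%N)
  = \sum_(k < n.+1)
      q ^+ (r * 'C(k.+1, 2) + k - r * k)%N * (qint q r) ^+ k
        * qfact (q ^+ r) k * qstir q r n k * t ^+ k
      / \prod_(i < k.+1) (1 - t * q ^+ (r * i)%N).
Proof.
move=> F q t.
have Q_neq1 : 1 - q ^+ r != 0.
  rewrite -tofracXn -tofrac1 -tofracB tofrac_eq0 -polyC_exp -polyC1 -polyCB polyC_eq0.
  by rewrite -(prednK hr) exprS oneBXM_neq0.
have adm_t : admissible q r t.
  by move=> m; rewrite -tofracXn -tofracM -tofrac1 -tofracB tofrac_eq0 oneBXM_neq0.
rewrite colored_eulerian_expansion // -/(qpoch q r t n).
rewrite mulrAC divff ?mul1r ?qpoch_neq0 //.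
by apply: eq_bigr => k _; rewrite /expansion_term /expansion_coef; ring.
Qed.
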